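(* Let $\mathbf U,\mathbf V,\mathbf W\in\mathbb K^p$, and let $U=\mathrm{val}(\mathbf U)$, $V=\mathrm{val}(\mathbf V)$, $W=\mathrm{val}(\mathbf W)$. Suppose $\max_{i\in[p]}U_i<\max_{i\in[p]}V_i<\max_{i\in[p]}W_i$ and the sets $\arg\max_{i\in[p]}V_i$ and $\arg\max_{i\in[p]}W_i$ are disjoint. Then $\lim_{t\to+\infty}\angle\,\mathbf U(t)\mathbf V(t)\mathbf W(t)=\pi/2$.
   Context: $\mathbb K$ is the real closed field of germs at $+\infty$ of real functions definable in $\bar{\mathbb R}^{\mathbb R}$, the ordered real field expanded by the power functions $t\mapsto t^r$ ($r\in\mathbb R$). Elements are identified with representative functions. $\mathrm{val}(\mathbf f)=\lim_{t\to\infty}\log|\mathbf f(t)|/\log t\in\mathbb R\cup\{-\infty\}$, applied entrywise. For points $U\ne V$, $V\ne W$ of $\mathbb R^p$, $\angle UVW\in[0,\pi]$ is the angle between the vectors $V-U$ and $W-V$, with $\cos\angle UVW=\langle V-U,W-V\rangle/(\|V-U\|\|W-V\|)$. *)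

From Stdlib Require Import Reals.
Open Scope R_scope.

(* Power function t^r, with the usual convention t^r := 0 for t <= 0. *)
Definition rpow (r t : R) : R := if Rlt_dec 0 t then Rpower t r else 0.

Inductive term : Type :=
| TVar : nat -> term
| TConst : R -> term
| TAdd : term -> term -> term
| TMul : term -> term -> term
| TNeg : term -> term
| TPow : R -> term -> term.

Inductive formula : Type :=
| FEq : term -> term -> formula
| FLt : term -> term -> formula
| FNot : formula -> formula
| FAnd : formula -> formula -> formula
| FOr : formula -> formula -> formula
| FEx : nat -> formula -> formula
| FAll : nat -> formula -> formula.

Definition env := nat -> R.
Definition upd (e : env) (n : nat) (x : R) : env :=
  fun m => if Nat.eqb m n then x else e m.

Fixpoint teval (e : env) (s : term) : R :=
  match s with
  | TVar n => e n
  | TConst c => c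
  | TAdd a b => teval e a + teval e b
  | TMul a b => teval e a * teval e b
  | TNeg a => - teval e a
  | TPow r a => rpow r (teval e a)
  end.

Fixpoint holds (e : env) (phi : formula) : Prop :=
  match phi with
  | FEq a b => teval e a = teval e b
  | FLt a b => teval e a < teval e b
  | FNot f => ~ holds e f
  | FAnd f g => holds e f /\ holds e g
  | FOr f g => holds e f \/ holds e g
  | FEx n f => exists x, holds (upd e n x) f
  | FAll n f => forall x, holds (upd e n x) f
  end.

Definition definable_fun (f : R -> R) : Prop :=
  exists phi : formula, forall (e : env) (x y : R),
    holds (upd (upd e 0 x) 1 y) phi <-> y = f x.

(* Elements of K (germs at +oo of definable functions) are represented by
   definable functions R -> R (any germ has a total definable representative,
   e.g. extend by 0); all statements below only concern behaviour at +oo. *)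
Definition inK (f : R -> R) : Prop := definable_fun f.

(** * Extended reals  R U {-oo}, with None = -oo *)
Definition ereal := option R.
Definition elt (x y : ereal) : Prop :=
  match x, y with
  | _, None => False
  | None, Some _ => True
  | Some a, Some b => a < b
  end.
Definition emax (x y : ereal) : ereal :=
  match x, y with
  | None, _ => y
  | _, None => x
  | Some a, Some b => Some (Rmax a b)
  end.
Fixpoint emax_idx (p : nat) (x : nat -> ereal) : ereal :=
  match p with
  | O => None
  | S q => emax (emax_idx q x) (x q)
  end.
Definition in_argmax (p : nat) (x : nat -> ereal) (i : nat) : Prop :=
  (i < p)%nat /\ x i = emax_idx p x.

(** * val(f) = lim_{t->+oo} log|f(t)| / log t  in R U {-oo}  (log 0 = -oo) *)
Definition has_val (f : R -> R) (v : ereal) : Prop :=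
  match v with
  | Some a => forall eps, eps > 0 -> exists T, forall t, t > T ->
                f t <> 0 /\ Rabs (ln (Rabs (f t)) / ln t - a) < eps
  | None => forall M, exists T, forall t, t > T ->
                f t = 0 \/ ln (Rabs (f t)) / ln t < M
  end.

Fixpoint sumR (p : nat) (g : nat -> R) : R :=
  match p with O => 0 | S q => sumR q g + g q end.
Definition inner (p : nat) (x y : nat -> R) : R := sumR p (fun i => x i * y i).
Definition norm (p : nat) (x : nat -> R) : R := sqrt (inner p x x).
Definition vsub (x y : nat -> R) : nat -> R := fun i => x i - y i.
Definition vneq (p : nat) (x y : nat -> R) : Prop := exists i, (i < p)%nat /\ x i <> y i.
(* angle UVW: angle between V - U and W - V *)
Definition angle (p : nat) (U V W : nat -> R) : R :=
  acos (inner p (vsub V U) (vsub W V) / (norm p (vsub V U) * norm p (vsub W V))).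

From Stdlib Require Import Reals Lra Lia Classical_Prop.
Open Scope R_scope.

(* Let b < c be the largest valuations of V and W, attained at
   indices j and k, and choose a margin d > 0 such that every U_i has
   valuation < b - d and, for every i, V_i has valuation < b - d or W_i has
   valuation < c - d (this is where the disjointness of the argmax sets is
   used).  For large t, each product (V_i - U_i)(W_i - V_i) is then
   O(t^(b + c - 3d/4)), while |V - U| >= |V_j - U_j| ~ t^b and
   |W - V| >= |W_k - V_k| ~ t^c up to t^(d/4) factors.  Hence the cosine of
   the angle is O(t^(-d/4)) and the angle tends to acos 0 = pi/2. *)

Definition eventually (P : R -> Prop) : Prop := exists T, forall t, t > T -> P t.

Lemma eventually_mono (P Q : R -> Prop) :
  (forall t, P t -> Q t) -> eventually P -> eventually Q.
Proof. intros HPQ [T HT]; exists T; auto. Qed.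

Lemma eventually_and (P Q : R -> Prop) :
  eventually P -> eventually Q -> eventually (fun t => P t /\ Q t).
Proof.
  intros [T1 H1] [T2 H2]; exists (Rmax T1 T2); intros t Ht.
  pose proof (Rmax_l T1 T2); pose proof (Rmax_r T1 T2).
  split; [apply H1 | apply H2]; lra.
Qed.

Lemma eventually_gt a : eventually (fun t => a < t).
Proof. exists a; intros t Ht; lra. Qed.

Lemma eventually_forall_lt (p : nat) (P : nat -> R -> Prop) :
  (forall i, (i < p)%nat -> eventually (P i)) ->
  eventually (fun t => forall i, (i < p)%nat -> P i t).
Proof.
  induction p as [|p IH]; intros H.
  - exists 0; intros; lia.
  - apply (eventually_mono (fun t => (forall i, (i < p)%nat -> P i t) /\ P p t)).
    + intros t [Hlt Hp] i Hi.
      destruct (Nat.eq_dec i p) as [->|]; [exact Hp | apply Hlt; lia].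
    + apply eventually_and; [apply IH; intros; apply H; lia | apply H; lia].
Qed.

Lemma Rpower_pos t a : 0 < Rpower t a.
Proof. apply exp_pos. Qed.

Lemma ln_gt_0 t : 1 < t -> 0 < ln t.
Proof. intros Ht; rewrite <- ln_1; apply ln_increasing; lra. Qed.

Lemma Rpower_eventually_ge a K : 0 < a -> eventually (fun t => K <= Rpower t a).
Proof.
  intros Ha; exists (exp (Rabs K / a)); intros t Ht.
  assert (Hln : Rabs K / a < ln t).
  { rewrite <- (ln_exp (Rabs K / a)); apply ln_increasing; [apply exp_pos | lra]. }
  assert (Rabs K < a * ln t).
  { apply (Rmult_lt_compat_l a) in Hln; [|lra].
    replace (a * (Rabs K / a)) with (Rabs K) in Hln by (field; lra); lra. }
  pose proof (exp_ineq1_le (a * ln t)); pose proof (Rle_abs K).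
  unfold Rpower; lra.
Qed.

Lemma lt_Rpower_of_ln_div y t m : 1 < t -> 0 < y -> ln y / ln t < m -> y < Rpower t m.
Proof.
  intros Ht Hy H; pose proof (ln_gt_0 t Ht).
  rewrite <- (exp_ln y) by exact Hy; apply exp_increasing.
  assert (ln y = ln y / ln t * ln t) by (field; lra); nra.
Qed.

Lemma Rpower_lt_of_ln_div y t m : 1 < t -> 0 < y -> m < ln y / ln t -> Rpower t m < y.
Proof.
  intros Ht Hy H; pose proof (ln_gt_0 t Ht).
  rewrite <- (exp_ln y) by exact Hy; apply exp_increasing.
  assert (ln y = ln y / ln t * ln t) by (field; lra); nra.
Qed.

Lemma has_val_eventually_le f x m :
  has_val f x -> elt x (Some m) -> eventually (fun t => Rabs (f t) <= Rpower t m).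
Proof.
  intros Hf Hx.
  apply (eventually_mono (fun t => 1 < t /\ (f t <> 0 -> ln (Rabs (f t)) / ln t < m))).
  { intros t [Ht H]; destruct (Req_dec (f t) 0) as [E|E].
    - rewrite E, Rabs_R0; left; apply Rpower_pos.
    - left; apply lt_Rpower_of_ln_div; auto; apply Rabs_pos_lt, E. }
  apply eventually_and; [apply eventually_gt|].
  destruct x as [a|]; simpl in Hf, Hx.
  - destruct (Hf (m - a)) as [T HT]; [lra|]; exists T; intros t Ht _.
    destruct (HT t Ht) as [_ Hlt]; apply Rabs_def2 in Hlt; lra.
  - destruct (Hf m) as [T HT]; exists T; intros t Ht Hnz.
    destruct (HT t Ht); [contradiction | assumption].
Qed.

Lemma has_val_eventually_ge f a m :
  has_val f (Some a) -> m < a -> eventually (fun t => Rpower t m <= Rabs (f t)).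
Proof.
  intros Hf Hm; destruct (Hf (a - m)) as [T HT]; [lra|].
  apply (eventually_mono (fun t => 1 < t /\ t > T)).
  - intros t [H1 Ht]; destruct (HT t Ht) as [Hnz Hlt]; apply Rabs_def2 in Hlt.
    left; apply Rpower_lt_of_ln_div; [exact H1 | apply Rabs_pos_lt, Hnz | lra].
  - apply eventually_and; [apply eventually_gt | exists T; auto].
Qed.

Definition ele (x y : ereal) : Prop :=
  match x, y with
  | None, _ => True
  | Some _, None => False
  | Some a, Some b => a <= b
  end.

Lemma ele_trans x y z : ele x y -> ele y z -> ele x z.
Proof. destruct x, y, z; simpl; auto; try lra; tauto. Qed.

Lemma ele_elt_trans x y z : ele x y -> elt y z -> elt x z.
Proof. destruct x, y, z; simpl; auto; try lra; tauto. Qed.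

Lemma ele_emax_l x y : ele x (emax x y).
Proof. destruct x, y; simpl; auto; try lra; apply Rmax_l. Qed.

Lemma ele_emax_r x y : ele y (emax x y).
Proof. destruct x, y; simpl; auto; try lra; apply Rmax_r. Qed.

Lemma ele_Some_neq_elt x m : ele x (Some m) -> x <> Some m -> elt x (Some m).
Proof. destruct x as [a|]; simpl; auto; intros H N; destruct H; congruence. Qed.

Lemma elt_Some_margin x m : elt x (Some m) -> exists d, 0 < d /\ elt x (Some (m - d)).
Proof.
  destruct x as [a|]; simpl; intros H.
  - exists ((m - a) / 2); split; lra.
  - exists 1; split; [lra | exact I].
Qed.

Lemma elt_Some_mono x m m' : elt x (Some m) -> m <= m' -> elt x (Some m').
Proof. destruct x; simpl; auto; lra. Qed.

Lemma emax_idx_ub p x i : (i < p)%nat -> ele (x i) (emax_idx p x).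
Proof.
  induction p as [|p IH]; intros Hi; [lia|]; simpl.
  destruct (Nat.eq_dec i p) as [->|]; [apply ele_emax_r|].
  eapply ele_trans; [apply IH; lia | apply ele_emax_l].
Qed.

Lemma emax_idx_attained p x b :
  emax_idx p x = Some b -> exists j, (j < p)%nat /\ x j = Some b.
Proof.
  induction p as [|p IH]; simpl; intros H; [discriminate|].
  destruct (emax_idx p x) as [a|]; destruct (x p) as [c|] eqn:E; simpl in H.
  - unfold Rmax in H; destruct (Rle_dec a c).
    + exists p; split; [lia | congruence].
    + destruct (IH H) as [j [Hj Hx]]; exists j; split; [lia | exact Hx].
  - destruct (IH H) as [j [Hj Hx]]; exists j; split; [lia | exact Hx].
  - exists p; split; [lia | congruence].
  - discriminate.
Qed.

Lemma exists_common_margin (p : nat) (Q : nat -> R -> Prop) :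
  (forall i d d', 0 < d' <= d -> Q i d -> Q i d') ->
  (forall i, (i < p)%nat -> exists d, 0 < d /\ Q i d) ->
  exists d, 0 < d /\ forall i, (i < p)%nat -> Q i d.
Proof.
  intros Hmono; induction p as [|p IH]; intros H.
  - exists 1; split; [lra | intros; lia].
  - destruct IH as [d1 [Hd1 H1]]; [intros; apply H; lia|].
    destruct (H p) as [d2 [Hd2 H2]]; [lia|].
    pose proof (Rmin_l d1 d2); pose proof (Rmin_r d1 d2).
    assert (0 < Rmin d1 d2) by (apply Rmin_case; lra).
    exists (Rmin d1 d2); split; [assumption|]; intros i Hi.
    destruct (Nat.eq_dec i p) as [->|].
    + apply (Hmono p d2); [lra | exact H2].
    + apply (Hmono i d1); [lra | apply H1; lia].
Qed.

Lemma exists_valuation_margin (p : nat) (u v w : nat -> ereal) (b c : R) :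
  b < c ->
  (forall i, (i < p)%nat -> elt (u i) (Some b)) ->
  (forall i, (i < p)%nat -> ele (v i) (Some b)) ->
  (forall i, (i < p)%nat -> ele (w i) (Some c)) ->
  (forall i, (i < p)%nat -> v i <> Some b \/ w i <> Some c) ->
  exists d, 0 < d /\ b + d / 4 <= c - d /\
    forall i, (i < p)%nat ->
      elt (u i) (Some (b - d)) /\ (elt (v i) (Some (b - d)) \/ elt (w i) (Some (c - d))).
Proof.
  intros Hbc Hu Hv Hw Hvw.
  set (Q i d := elt (u i) (Some (b - d)) /\
                  (elt (v i) (Some (b - d)) \/ elt (w i) (Some (c - d)))).
  assert (Hmono : forall i d d', 0 < d' <= d -> Q i d -> Q i d').
  { intros i d d' Hd [H1 H2]; split; [eapply elt_Some_mono; [exact H1 | lra]|].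
    destruct H2; [left | right]; (eapply elt_Some_mono; [eassumption | lra]). }
  destruct (exists_common_margin p Q Hmono) as [d [Hd HQ]].
  { intros i Hi.
    destruct (elt_Some_margin _ _ (Hu i Hi)) as [d1 [Hd1 H1]].
    assert (H2 : exists d2, 0 < d2 /\
               (elt (v i) (Some (b - d2)) \/ elt (w i) (Some (c - d2)))).
    { destruct (Hvw i Hi) as [E|E].
      - destruct (elt_Some_margin _ _ (ele_Some_neq_elt _ _ (Hv i Hi) E)) as [d2 ?].
        exists d2; tauto.
      - destruct (elt_Some_margin _ _ (ele_Some_neq_elt _ _ (Hw i Hi) E)) as [d2 ?].
        exists d2; tauto. }
    destruct H2 as [d2 [Hd2 H2]].
    pose proof (Rmin_l d1 d2); pose proof (Rmin_r d1 d2).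
    assert (0 < Rmin d1 d2) by (apply Rmin_case; lra).
    exists (Rmin d1 d2); split; [assumption|].
    split; [eapply elt_Some_mono; [exact H1 | lra]|].
    destruct H2; [left | right]; (eapply elt_Some_mono; [eassumption | lra]). }
  pose proof (Rmin_l d ((c - b) / 2)); pose proof (Rmin_r d ((c - b) / 2)).
  assert (0 < Rmin d ((c - b) / 2)) by (apply Rmin_case; lra).
  exists (Rmin d ((c - b) / 2)); split; [assumption | split; [lra|]].
  intros i Hi; exact (Hmono i d (Rmin d ((c - b) / 2)) ltac:(lra) (HQ i Hi)).
Qed.

Lemma sumR_abs_le p g K :
  (forall i, (i < p)%nat -> Rabs (g i) <= K) -> Rabs (sumR p g) <= INR p * K.
Proof.
  induction p as [|p IH]; intros H; simpl sumR.
  - rewrite Rabs_R0; simpl; lra.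
  - rewrite S_INR; eapply Rle_trans; [apply Rabs_triang|].
    assert (Rabs (sumR p g) <= INR p * K) by (apply IH; intros; apply H; lia).
    assert (Rabs (g p) <= K) by (apply H; lia); lra.
Qed.

Lemma sumR_ge_term p g j :
  (forall i, 0 <= g i) -> (j < p)%nat -> g j <= sumR p g.
Proof.
  intros Hg; induction p as [|p IH]; simpl; intros Hj; [lia|].
  assert (0 <= sumR p g) by (clear IH Hj; induction p; simpl; [lra | pose proof (Hg p); lra]).
  destruct (Nat.eq_dec j p) as [->|]; [lra|].
  pose proof (IH ltac:(lia)); pose proof (Hg p); lra.
Qed.

Lemma norm_ge_coord p x j : (j < p)%nat -> Rabs (x j) <= norm p x.
Proof.
  intros Hj; unfold norm, inner; rewrite <- sqrt_Rsqr_abs.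
  apply sqrt_le_1_alt, (sumR_ge_term p (fun i => x i * x i)); [|exact Hj].
  intros; apply Rle_0_sqr.
Qed.

Lemma Rabs_div_le a b A B : Rabs a <= A -> 0 < B <= b -> Rabs (a / b) <= A / B.
Proof.
  intros Ha Hb; unfold Rdiv.
  rewrite Rabs_mult, Rabs_inv, (Rabs_pos_eq b) by lra.
  apply Rmult_le_compat; [apply Rabs_pos | left; apply Rinv_0_lt_compat; lra | exact Ha |].
  apply Rinv_le_contravar; lra.
Qed.

Lemma Rdiv_lt_of_ge a e q : 0 <= a -> 0 < e -> a / e + 1 <= q -> a / q < e.
Proof.
  intros Ha He Hq.
  assert (e * (a / e) = a) by (field; lra).
  pose proof (Rle_mult_inv_pos a e Ha He).
  apply (Rmult_lt_reg_r q); [lra|].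
  unfold Rdiv; rewrite Rmult_assoc, Rinv_l, Rmult_1_r by lra; nra.
Qed.

(* [dominated p x y z b c d j k t] collects the size estimates satisfied by
   the points x = U(t), y = V(t), z = W(t) for large t, where b and c are the
   maximal valuations of V and W, attained at j and k, and d is a margin. *)
Set Implicit Arguments.
Record dominated (p : nat) (x y z : nat -> R) (b c d : R) (j k : nat) (t : R) : Prop := {
  dominated_t : 1 < t;
  dominated_gap : 2 <= Rpower t (3 * d / 4);
  dominated_x : forall i, (i < p)%nat -> Rabs (x i) <= Rpower t (b - d);
  dominated_y : forall i, (i < p)%nat -> Rabs (y i) <= Rpower t (b + d / 4);
  dominated_z : forall i, (i < p)%nat -> Rabs (z i) <= Rpower t (c + d / 4);
  dominated_yz : forall i, (i < p)%nat ->
    Rabs (y i) <= Rpower t (b - d) \/ Rabs (z i) <= Rpower t (c - d);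
  dominated_j : (j < p)%nat;
  dominated_yj : Rpower t (b - d / 4) <= Rabs (y j);
  dominated_k : (k < p)%nat;
  dominated_zk : Rpower t (c - d / 4) <= Rabs (z k) }.
Unset Implicit Arguments.

Section DominatedEstimates.

Context {p : nat} {x y z : nat -> R} {b c d : R} {j k : nat} {t : R}.
Hypotheses (Hd : 0 < d) (Hbc : b + d / 4 <= c - d).
Hypothesis D : dominated p x y z b c d j k t.

Lemma dominated_Rpower_le a a' : a <= a' -> Rpower t a <= Rpower t a'.
Proof. intros; apply Rle_Rpower; [left; apply (dominated_t D) | assumption]. Qed.

Lemma dominated_Rpower_gap a : 2 * Rpower t (a - d) <= Rpower t (a - d / 4).
Proof.
  replace (a - d / 4) with (3 * d / 4 + (a - d)) by field; rewrite Rpower_plus.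
  pose proof (dominated_gap D); pose proof (Rpower_pos t (a - d)); nra.
Qed.

Lemma dominated_sub_yx : Rpower t (b - d / 4) / 2 <= Rabs (y j - x j).
Proof.
  destruct D as [_ _ Hx _ _ _ Hj Hyj _ _].
  pose proof (Hx j Hj); pose proof (dominated_Rpower_gap b).
  pose proof (Rabs_triang_inv (y j) (x j)); lra.
Qed.

Lemma dominated_sub_zy : Rpower t (c - d / 4) / 2 <= Rabs (z k - y k).
Proof.
  destruct D as [_ _ _ Hy _ _ _ _ Hk Hzk].
  pose proof (Hy k Hk); pose proof (dominated_Rpower_le _ _ Hbc).
  pose proof (dominated_Rpower_gap c).
  pose proof (Rabs_triang_inv (z k) (y k)); lra.
Qed.

Lemma dominated_vneq_xy : vneq p x y.
Proof.
  exists j; split; [exact (dominated_j D)|]; intros E.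
  pose proof dominated_sub_yx; pose proof (Rpower_pos t (b - d / 4)).
  rewrite E, Rminus_diag, Rabs_R0 in *; lra.
Qed.

Lemma dominated_vneq_yz : vneq p y z.
Proof.
  exists k; split; [exact (dominated_k D)|]; intros E.
  pose proof dominated_sub_zy; pose proof (Rpower_pos t (c - d / 4)).
  rewrite E, Rminus_diag, Rabs_R0 in *; lra.
Qed.

Lemma dominated_product i : (i < p)%nat ->
  Rabs ((y i - x i) * (z i - y i)) <= 4 * Rpower t (b + c - 3 * d / 4).
Proof.
  intros Hi; destruct D as [_ _ Hx Hy Hz Hyz _ _ _ _].
  pose proof (Hx i Hi); pose proof (Hy i Hi); pose proof (Hz i Hi).
  assert (Hyx : Rabs (y i - x i) <= Rabs (y i) + Rabs (x i))
    by (unfold Rminus; rewrite <- (Rabs_Ropp (x i)); apply Rabs_triang).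
  assert (Hzy : Rabs (z i - y i) <= Rabs (z i) + Rabs (y i))
    by (unfold Rminus; rewrite <- (Rabs_Ropp (y i)); apply Rabs_triang).
  pose proof (dominated_Rpower_le (b - d) (b + d / 4) ltac:(lra)).
  pose proof (dominated_Rpower_le (b + d / 4) (c + d / 4) ltac:(lra)).
  pose proof (dominated_Rpower_le _ _ Hbc).
  pose proof (Rabs_pos (y i - x i)); pose proof (Rabs_pos (z i - y i)).
  rewrite Rabs_mult; destruct (Hyz i Hi) as [Hsmall | Hsmall].
  - replace (b + c - 3 * d / 4) with ((b - d) + (c + d / 4)) by field.
    rewrite Rpower_plus.
    apply Rle_trans with ((2 * Rpower t (b - d)) * (2 * Rpower t (c + d / 4)));
      [apply Rmult_le_compat; lra | lra].
  - replace (b + c - 3 * d / 4) with ((b + d / 4) + (c - d)) by field.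
    rewrite Rpower_plus.
    apply Rle_trans with ((2 * Rpower t (b + d / 4)) * (2 * Rpower t (c - d)));
      [apply Rmult_le_compat; lra | lra].
Qed.

Lemma dominated_cos_angle :
  Rabs (inner p (vsub y x) (vsub z y) / (norm p (vsub y x) * norm p (vsub z y)))
    <= 16 * INR p / Rpower t (d / 4).
Proof.
  pose proof (Rpower_pos t (b - d / 4)); pose proof (Rpower_pos t (c - d / 4)).
  pose proof (Rpower_pos t (b + c - 3 * d / 4)); pose proof (Rpower_pos t (d / 4)).
  assert (Hn1 : Rpower t (b - d / 4) / 2 <= norm p (vsub y x)).
  { eapply Rle_trans; [apply dominated_sub_yx|].
    apply (norm_ge_coord p (vsub y x)), (dominated_j D). }
  assert (Hn2 : Rpower t (c - d / 4) / 2 <= norm p (vsub z y)).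
  { eapply Rle_trans; [apply dominated_sub_zy|].
    apply (norm_ge_coord p (vsub z y)), (dominated_k D). }
  assert (Hsplit : Rpower t (b - d / 4) * Rpower t (c - d / 4)
                   = Rpower t (b + c - 3 * d / 4) * Rpower t (d / 4)).
  { rewrite <- !Rpower_plus; f_equal; field. }
  eapply Rle_trans.
  - apply Rabs_div_le with (B := Rpower t (b - d / 4) / 2 * (Rpower t (c - d / 4) / 2)).
    + apply sumR_abs_le; intros i Hi; apply dominated_product, Hi.
    + split; [apply Rmult_lt_0_compat; lra | apply Rmult_le_compat; lra].
  - right.
    replace (Rpower t (b - d / 4) / 2 * (Rpower t (c - d / 4) / 2))
      with (Rpower t (b + c - 3 * d / 4) * Rpower t (d / 4) / 4) by lra.
    field; lra.
Qed.

End DominatedEstimates.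

Lemma eventually_coordinate_bounds (X Y Z : R -> R) (x y z : ereal) (b c d : R) :
  has_val X x -> has_val Y y -> has_val Z z ->
  ele y (Some b) -> ele z (Some c) -> 0 < d ->
  elt x (Some (b - d)) -> elt y (Some (b - d)) \/ elt z (Some (c - d)) ->
  eventually (fun t =>
    Rabs (X t) <= Rpower t (b - d) /\ Rabs (Y t) <= Rpower t (b + d / 4) /\
    Rabs (Z t) <= Rpower t (c + d / 4) /\
    (Rabs (Y t) <= Rpower t (b - d) \/ Rabs (Z t) <= Rpower t (c - d))).
Proof.
  intros HX HY HZ Hy Hz Hd Hx Hyz.
  assert (Hsmall : eventually (fun t =>
            Rabs (Y t) <= Rpower t (b - d) \/ Rabs (Z t) <= Rpower t (c - d))).
  { destruct Hyz as [H | H];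
      [ apply eventually_mono with (2 := has_val_eventually_le _ _ _ HY H)
      | apply eventually_mono with (2 := has_val_eventually_le _ _ _ HZ H) ]; tauto. }
  repeat apply eventually_and; [| | | exact Hsmall].
  - exact (has_val_eventually_le _ _ _ HX Hx).
  - apply (has_val_eventually_le _ _ _ HY), (ele_elt_trans y (Some b)); simpl; [exact Hy | lra].
  - apply (has_val_eventually_le _ _ _ HZ), (ele_elt_trans z (Some c)); simpl; [exact Hz | lra].
Qed.

Lemma eventually_dominated (p : nat) (U V W : nat -> R -> R) (u v w : nat -> ereal)
    (b c d : R) (j k : nat) (K : R) :
  (forall i, (i < p)%nat -> has_val (U i) (u i)) ->
  (forall i, (i < p)%nat -> has_val (V i) (v i)) ->
  (forall i, (i < p)%nat -> has_val (W i) (w i)) ->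
  (forall i, (i < p)%nat -> ele (v i) (Some b)) ->
  (forall i, (i < p)%nat -> ele (w i) (Some c)) ->
  (forall i, (i < p)%nat ->
     elt (u i) (Some (b - d)) /\ (elt (v i) (Some (b - d)) \/ elt (w i) (Some (c - d)))) ->
  0 < d -> (j < p)%nat -> v j = Some b -> (k < p)%nat -> w k = Some c ->
  eventually (fun t =>
    dominated p (fun i => U i t) (fun i => V i t) (fun i => W i t) b c d j k t /\
    K <= Rpower t (d / 4)).
Proof.
  intros hu hv hw Hvb Hwc Hm Hd Hj Hvj Hk Hwk.
  assert (HVj : has_val (V j) (Some b)) by (rewrite <- Hvj; auto).
  assert (HWk : has_val (W k) (Some c)) by (rewrite <- Hwk; auto).
  assert (Hbounds := eventually_forall_lt p _ (fun i Hi =>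
    eventually_coordinate_bounds _ _ _ _ _ _ b c d (hu i Hi) (hv i Hi) (hw i Hi)
      (Hvb i Hi) (Hwc i Hi) Hd (proj1 (Hm i Hi)) (proj2 (Hm i Hi)))).
  assert (HVj' := has_val_eventually_ge _ _ (b - d / 4) HVj ltac:(lra)).
  assert (HWk' := has_val_eventually_ge _ _ (c - d / 4) HWk ltac:(lra)).
  assert (Hgap := Rpower_eventually_ge (3 * d / 4) 2 ltac:(lra)).
  assert (HK := Rpower_eventually_ge (d / 4) K ltac:(lra)).
  generalize (eventually_and _ _ (eventually_and _ _ (eventually_and _ _
    (eventually_and _ _ (eventually_and _ _ (eventually_gt 1) Hgap) Hbounds) HVj') HWk') HK).
  apply eventually_mono; intros t [[[[[Ht Hg] Hb] HV] HW] HKt]; split; [|exact HKt].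
  constructor; auto; intros i Hi; destruct (Hb i Hi) as [? [? [? ?]]]; auto.
Qed.

Lemma acos_near_PI2 eps : 0 < eps ->
  exists eta, 0 < eta /\ forall x, Rabs x < eta -> Rabs (acos x - PI / 2) < eps.
Proof.
  intros Heps.
  assert (Hrange : -1 < 0 < 1) by lra.
  destruct (derivable_continuous_pt _ _ (derivable_pt_acos 0 Hrange) eps Heps)
    as [eta [Heta H]].
  exists eta; split; [exact Heta|]; intros x Hx; rewrite <- acos_0.
  destruct (Req_dec x 0) as [->|Hx0]; [rewrite Rminus_diag, Rabs_R0; exact Heps|].
  apply H; split; [split; [exact I | auto] |].
  simpl; unfold R_dist; rewrite Rminus_0_r; exact Hx.
Qed.

Theorem mainTheorem16 (p : nat) (U V W : nat -> R -> R) (u v w : nat -> ereal)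
  (hUK : forall i, (i < p)%nat -> inK (U i))
  (hVK : forall i, (i < p)%nat -> inK (V i))
  (hWK : forall i, (i < p)%nat -> inK (W i))
  (hu : forall i, (i < p)%nat -> has_val (U i) (u i))
  (hv : forall i, (i < p)%nat -> has_val (V i) (v i))
  (hw : forall i, (i < p)%nat -> has_val (W i) (w i))
  (hUV : elt (emax_idx p u) (emax_idx p v))
  (hVW : elt (emax_idx p v) (emax_idx p w))
  (hdisj : forall i, ~ (in_argmax p v i /\ in_argmax p w i)) :
  (exists T, forall t, t > T ->
     vneq p (fun i => U i t) (fun i => V i t) /\
     vneq p (fun i => V i t) (fun i => W i t)) /\
  (forall eps, eps > 0 -> exists T, forall t, t > T ->
     Rabs (angle p (fun i => U i t) (fun i => V i t) (fun i => W i t) - PI / 2) < eps).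
Proof.
  destruct (emax_idx p v) as [b|] eqn:Ev; [|destruct (emax_idx p u); contradiction].
  destruct (emax_idx p w) as [c|] eqn:Ew; [|contradiction].
  destruct (emax_idx_attained _ _ _ Ev) as [j [Hj Hvj]].
  destruct (emax_idx_attained _ _ _ Ew) as [k [Hk Hwk]].
  assert (Hvb : forall i, (i < p)%nat -> ele (v i) (Some b))
    by (intros; rewrite <- Ev; apply emax_idx_ub; auto).
  assert (Hwc : forall i, (i < p)%nat -> ele (w i) (Some c))
    by (intros; rewrite <- Ew; apply emax_idx_ub; auto).
  assert (Hub : forall i, (i < p)%nat -> elt (u i) (Some b))
    by (intros i Hi; exact (ele_elt_trans _ _ _ (emax_idx_ub p u i Hi) hUV)).
  assert (Hvw : forall i, (i < p)%nat -> v i <> Some b \/ w i <> Some c).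
  { intros i Hi; apply not_and_or; intros [E1 E2]; apply (hdisj i).
    unfold in_argmax; rewrite Ev, Ew; tauto. }
  destruct (exists_valuation_margin p u v w b c hVW Hub Hvb Hwc Hvw)
    as [d [Hd [Hbc Hm]]].
  pose proof (fun K => eventually_dominated p U V W u v w b c d j k K
                         hu hv hw Hvb Hwc Hm Hd Hj Hvj Hk Hwk) as Hdom.
  split.
  - apply eventually_mono with (2 := Hdom 0); intros t [D _].
    exact (conj (dominated_vneq_xy D) (dominated_vneq_yz Hbc D)).
  - intros eps Heps; destruct (acos_near_PI2 eps Heps) as [eta [Heta Hacos]].
    apply eventually_mono with (2 := Hdom (16 * INR p / eta + 1)); intros t [D HK].
    apply Hacos; eapply Rle_lt_trans; [exact (dominated_cos_angle Hd Hbc D)|].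
    apply Rdiv_lt_of_ge; [pose proof (pos_INR p); lra | exact Heta | exact HK].
Qed.
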